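(* Let $n\ge 5$ and $k=2$. There exists a finite field $\mathbb{F}$ and an exact scalar linear adaptive regenerating code over $\mathbb{F}$ with $n$ nodes and $k=2$ that supports both $t=1$ and $t=2$ simultaneous failures. Concretely, for the code of $n=d+2$ nodes (with $\alpha=d=n-2$) described below, all three of the following hold: (i) any $2$ nodes recover the file; (ii) any $2$ simultaneously failed nodes can be exactly regenerated by an exact scalar coordinated repair using the $d=n-2$ surviving nodes as helpers; (iii) any single failed node can be exactly regenerated by an exact scalar repair in which the newcomer downloads exactly one symbol, a linear combination of the helper's stored symbols, from each of the $n-1$ surviving nodes, and then computes the lost $\alpha$ symbols as a linear function of these $n-1$ symbols. The code is the following. Let $\mathbb{F}$ be a finite field with a primitive element $\omega$ and $|\mathbb{F}|-1\ge\alpha$. Node 1 stores $\vec a=(a_1,\dots,a_\alpha)^t$ and node 2 stores $\vec b=(b_1,\dots,b_\alpha)^t$. For $i\in\{0,\dots,\alpha-1\}$, node $i$ among the redundancy nodes stores the vector whose $j$-th coordinate is $a_j+\omega^{(i+j-1)\bmod\alpha}b_j$.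
   Context: Fix integers $n,k,d,t$ with $k\le d$, $t\ge 1$, $d+t\le n$, and a finite field $\mathbb{F}$. A file consists of $\mathcal{M}=k(d-k+t)$ symbols of $\mathbb{F}$. A scalar linear minimum storage coordinated regenerating (MSCR) code with parameters $(n,k,d,t)$ stores at each of $n$ nodes $\alpha=d-k+t$ symbols. Each stored symbol is an $\mathbb{F}$-linear combination of the file symbols. The code must have the MDS property: the file can be recovered from the contents of any $k$ nodes. An exact scalar coordinated repair of a set of $t$ failed nodes proceeds in three steps, with $t$ newcomer nodes, one replacing each failed node: (collect) each newcomer contacts $d$ surviving nodes (helpers) and receives from each helper exactly one symbol, namely an $\mathbb{F}$-linear combination of that helper's $\alpha$ stored symbols; the combination may depend on which newcomer it is sent to; (coordinate) each newcomer sends to each of the other $t-1$ newcomers exactly one symbol, namely an $\mathbb{F}$-linear combination of the $d$ symbols it collected; (store) each newcomer computes, as an $\mathbb{F}$-linear function of the $d+t-1$ symbols it holds, exactly the $\alpha$ symbols that were stored by the failed node it replaces. An exact scalar linear adaptive regenerating code with $n$ nodes and parameter $k$ stores a file of $k(n-k)$ symbols as $\alpha=n-k$ symbols per node and has the MDS property. For each number $t$ of simultaneous failures it supports, any $t$ failed nodes can be exactly repaired by an exact scalar coordinated repair with $d=n-t$ helpers, namely all surviving nodes. For $t=1$ there is no coordination step. Note that $\alpha=d-k+t$ for every such $t$. *)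

From HB Require Import structures.
From mathcomp Require Import all_boot all_order all_algebra all_field.
Set Implicit Arguments. Unset Strict Implicit. Unset Printing Implicit Defensive.
Import GRing.Theory.
Local Open Scope ring_scope.

(* A scalar linear code with n nodes, file of m symbols, alpha symbols per node:
   node i stores  x *m G i  for the file (row vector) x : 'rV_m. *)

Definition mds_property (F : fieldType) (n m alpha : nat)
    (G : 'I_n -> 'M[F]_(m, alpha)) (k : nat) : Prop :=
  forall S : {set 'I_n}, #|S| = k ->
  forall x y : 'rV[F]_m, (forall i, i \in S -> x *m G i = y *m G i) -> x = y.

Definition helper_sym (F : fieldType) (n m alpha : nat)
    (G : 'I_n -> 'M[F]_(m, alpha)) (c : 'I_n -> 'I_n -> 'cV[F]_alpha)
    (x : 'rV[F]_m) (f h : 'I_n) : F :=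
  (x *m G h *m c f h) ord0 ord0.

(* Exact scalar coordinated repair of the failed set T, with helpers = all
   surviving nodes (d = n - #|T|):
   - collect: newcomer f receives helper_sym from every h not in T;
   - coordinate: newcomer g sends to newcomer f (f <> g in T) the symbol
       \sum_(h not in T) e g f h * helper_sym g h;
   - store: newcomer f computes x *m G f as a linear function (coefficient
       rows r f h, q f g) of its d + #|T| - 1 symbols.
   For #|T| = 1 the coordination sum is empty: ordinary exact repair. *)
Definition coord_repairable (F : fieldType) (n m alpha : nat)
    (G : 'I_n -> 'M[F]_(m, alpha)) (T : {set 'I_n}) : Prop :=
  exists (c : 'I_n -> 'I_n -> 'cV[F]_alpha)
         (e : 'I_n -> 'I_n -> 'I_n -> F)
         (r : 'I_n -> 'I_n -> 'rV[F]_alpha)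
         (q : 'I_n -> 'I_n -> 'rV[F]_alpha),
  forall (x : 'rV[F]_m) (f : 'I_n), f \in T ->
    x *m G f =
      \sum_(h in ~: T) helper_sym G c x f h *: r f h
    + \sum_(g in T :\ f)
        (\sum_(h in ~: T) e g f h * helper_sym G c x g h) *: q f g.

(* The concrete code of the paper, alpha = n - 2, file x = (a | b) with
   a, b : 'rV_alpha.  Node 0 stores a, node 1 stores b, node 2 + i
   (i = 0..alpha-1) stores (a_j + w^((i+j) mod alpha) b_j)_j  (0-based j). *)
Definition adrc_node (F : fieldType) (n : nat) (w : F) (i : 'I_n)
    : 'M[F]_((n - 2) + (n - 2), n - 2) :=
  if (i : nat) == 0%N then col_mx 1%:M 0
  else if (i : nat) == 1%N then col_mx 0 1%:M
  else col_mx 1%:M (diag_mx (\row_(j < n - 2) w ^+ (((i - 2) + j) %% (n - 2)))).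

From HB Require Import structures.
From mathcomp Require Import all_boot all_order all_algebra all_field.
From mathcomp Require Import ring zify.
From mathcomp Require cyclic.
Import GRing.Theory.
Local Open Scope ring_scope.
Set Implicit Arguments. Unset Strict Implicit. Unset Printing Implicit Defensive.

(* When all 2 x 2 determinants det2 u v k of
      distinct nodes are nonzero, the code is MDS for k = 2, and in each
      coordinate every node is a combination of any two others f, g.  Both
      repair problems are then solved as soon as, for every ordered pair of
      distinct nodes f, g, the vectors ratio f g h = det2 f h / det2 h g
      (h ranging over the other nodes) span F^alpha.
   3. For the code of the paper the determinants are nonzero because w has
      order larger than alpha, and each ratio family is compared, according to
      whether f and g are systematic or redundant, with one of two basic
      spanning families: the cyclic shifts of (z^k)_k for z = w or w^-1, and a
      Cauchy-like family.
   4. A prime field F_p with p > n provides w as a primitive root of unity. *)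

Section Span.
Variables (F : fieldType) (n m : nat).

Definition in_span (H : {set 'I_n}) (Phi : 'I_n -> 'I_m -> F) (v : 'I_m -> F) :=
  exists rho : 'I_n -> F, forall k, v k = \sum_(h in H) rho h * Phi h k.

Definition spans (H : {set 'I_n}) (Phi : 'I_n -> 'I_m -> F) :=
  forall v, in_span H Phi v.

Variables (H : {set 'I_n}) (Phi : 'I_n -> 'I_m -> F).

Lemma in_span_ext v v' : (forall k, v k = v' k) -> in_span H Phi v' -> in_span H Phi v.
Proof. by move=> e [rho Hr]; exists rho => k; rewrite e Hr. Qed.

Lemma in_spanD v v' : in_span H Phi v -> in_span H Phi v' ->
  in_span H Phi (fun k => v k + v' k).
Proof.
move=> [r1 H1] [r2 H2]; exists (fun h => r1 h + r2 h) => k.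
by rewrite H1 H2 -big_split; apply: eq_bigr => h _; rewrite mulrDl.
Qed.

Lemma in_spanZ c v : in_span H Phi v -> in_span H Phi (fun k => c * v k).
Proof.
move=> [r1 H1]; exists (fun h => c * r1 h) => k.
by rewrite H1 mulr_sumr; apply: eq_bigr => h _; rewrite mulrA.
Qed.

Lemma in_span_mem h : h \in H -> in_span H Phi (Phi h).
Proof.
move=> hH; exists (fun h' => (h' == h)%:R) => k.
rewrite (bigD1 h) //= eqxx mul1r big1 ?addr0 // => h' /andP[_ /negPf->].
by rewrite mul0r.
Qed.

Lemma in_span_comb1 v h c :
  h \in H -> (forall k, v k = c * Phi h k) -> in_span H Phi v.
Proof. by move=> hH e; apply: in_span_ext e _; apply/in_spanZ/in_span_mem. Qed.

Lemma in_span_comb2 v h1 h2 c1 c2 : h1 \in H -> h2 \in H ->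
  (forall k, v k = c1 * Phi h1 k + c2 * Phi h2 k) -> in_span H Phi v.
Proof.
move=> h1H h2H e; apply: in_span_ext e _.
by apply: in_spanD; apply/in_spanZ/in_span_mem.
Qed.

Lemma in_span_sum (I : finType) (A : {pred I}) (v : I -> 'I_m -> F) :
  (forall i, i \in A -> in_span H Phi (v i)) ->
  in_span H Phi (fun k => \sum_(i in A) v i k).
Proof.
move=> hv.
have hv' i : exists rho : 'I_n -> F,
    i \in A -> forall k, v i k = \sum_(h in H) rho h * Phi h k.
  case: (boolP (i \in A)) => iA; last by exists (fun _ => 0).
  by have [rho Hr] := hv i iA; exists rho.
have [rho Hr] := fin_all_exists hv'.
exists (fun h => \sum_(i in A) rho i h) => k.
rewrite (eq_bigr (fun i => \sum_(h in H) rho i h * Phi h k)); last first.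
  by move=> i iA; rewrite Hr.
by rewrite exchange_big; apply: eq_bigr => h _; rewrite mulr_suml.
Qed.

Lemma spans_basis : (forall j, in_span H Phi (fun k => (k == j)%:R)) -> spans H Phi.
Proof.
move=> hd v.
apply: (@in_span_ext _ (fun k => \sum_(j in 'I_m) v j * (k == j)%:R)).
  move=> k; rewrite (bigD1 k) //= eqxx mulr1 big1 ?addr0 // => j /negPf.
  by rewrite eq_sym => ->; rewrite mulr0.
by apply: in_span_sum => j _; apply: in_spanZ.
Qed.

End Span.

Lemma spans_trans (F : fieldType) n n' m (H : {set 'I_n}) (H' : {set 'I_n'})
    (Phi : 'I_n -> 'I_m -> F) (Psi : 'I_n' -> 'I_m -> F) :
  spans H' Psi -> (forall h, h \in H' -> in_span H Phi (Psi h)) -> spans H Phi.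
Proof.
move=> sPsi hPsi v; have [rho Hr] := sPsi v.
apply: in_span_ext Hr _; apply: in_span_sum => h hH.
exact: in_spanZ (hPsi h hH).
Qed.

Lemma spans_scale (F : fieldType) n m (H : {set 'I_n}) (Phi : 'I_n -> 'I_m -> F)
    (D : 'I_m -> F) :
  spans H Phi -> (forall k, D k != 0) -> spans H (fun h k => D k * Phi h k).
Proof.
move=> sPhi hD v; have [rho Hr] := sPhi (fun k => v k / D k).
exists rho => k; have := Hr k; move/(congr1 (fun x => D k * x)).
rewrite mulrC divfK // => ->; rewrite mulr_sumr; apply: eq_bigr => h _.
by rewrite mulrCA.
Qed.

Lemma spans_ext (F : fieldType) n m (H : {set 'I_n}) (Phi Psi : 'I_n -> 'I_m -> F) :
  (forall h k, h \in H -> Phi h k = Psi h k) -> spans H Phi -> spans H Psi.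
Proof.
move=> e sPhi v; have [rho Hr] := sPhi v; exists rho => k; rewrite Hr.
by apply: eq_bigr => h hH; rewrite e.
Qed.

Lemma coord_repairable_of_columns (F : fieldType) n p alpha
    (G : 'I_n -> 'M[F]_(p, alpha)) (T : {set 'I_n})
    (c : 'I_n -> 'I_n -> 'cV[F]_alpha) (e : 'I_n -> 'I_n -> 'I_n -> F) :
  (forall f j, f \in T -> exists rho kap : 'I_n -> F,
     col j (G f) = \sum_(h in ~: T) rho h *: (G h *m c f h)
                 + \sum_(g in T :\ f) kap g *: \sum_(h in ~: T) e g f h *: (G h *m c g h)) ->
  coord_repairable G T.
Proof.
move=> hyp.
have hyp' f j : exists rk : ('I_n -> F) * ('I_n -> F), f \in T ->
     col j (G f) = \sum_(h in ~: T) rk.1 h *: (G h *m c f h)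
                 + \sum_(g in T :\ f) rk.2 g *: \sum_(h in ~: T) e g f h *: (G h *m c g h).
  case: (boolP (f \in T)) => fT; last by exists (fun _ => 0, fun _ => 0).
  by have [rho [kap E]] := hyp f j fT; exists (rho, kap).
have [R HR] := fin_all_exists (fun f => fin_all_exists (hyp' f)).
exists c, e, (fun f h => \row_j (R f j).1 h), (fun f g => \row_j (R f j).2 g).
move=> x f fT; apply/rowP => j.
have -> : (x *m G f) 0 j = (x *m col j (G f)) 0 0.
  by rewrite !mxE; apply: eq_bigr => i _; rewrite !mxE.
rewrite (HR f j fT) mulmxDr !mulmx_sumr mxE !summxE [RHS]mxE !summxE.
congr (_ + _); apply: eq_bigr => g _.
  rewrite -scalemxAr [LHS]mxE [RHS]mxE /helper_sym mulmxA mulrC.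
  by rewrite mxE; congr (_ * _); rewrite mxE.
rewrite -scalemxAr mulmx_sumr mxE summxE mxE mxE mulrC; congr (_ * _).
by apply: eq_bigr => h _; rewrite -scalemxAr mxE /helper_sym mulmxA.
Qed.

Lemma coord_repairable_ext (F : fieldType) n p alpha (G1 G2 : 'I_n -> 'M[F]_(p, alpha))
    (T : {set 'I_n}) :
  (forall i, G1 i = G2 i) -> coord_repairable G2 T -> coord_repairable G1 T.
Proof.
move=> E [c [e [r [q H]]]]; exists c, e, r, q => x f fT; rewrite E H //.
congr (_ + _); first by apply: eq_bigr => h _; rewrite /helper_sym E.
apply: eq_bigr => g _; congr (_ *: _); apply: eq_bigr => h _.
by rewrite /helper_sym E.
Qed.

Section HelperSums.
Variables (F : fieldType) (n : nat) (A : {set 'I_n}).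

Lemma sum_lin (w a b : 'I_n -> F) x y :
  \sum_(h in A) w h * (a h * x + b h * y) =
  (\sum_(h in A) w h * a h) * x + (\sum_(h in A) w h * b h) * y.
Proof.
by rewrite !mulr_suml -big_split; apply: eq_bigr => h _; rewrite mulrDr !mulrA.
Qed.

Definition diff_weight (p q h : 'I_n) : F := (h == p)%:R - (h == q)%:R.

Lemma sum_diff_weight p q (Z : 'I_n -> F) : p \in A -> q \in A -> p != q ->
  \sum_(h in A) diff_weight p q h * Z h = Z p - Z q.
Proof.
move=> pA qA pq; rewrite /diff_weight (bigD1 p) //= (bigD1 q) /=; last first.
  by rewrite qA eq_sym.
rewrite eqxx (negPf pq) eq_sym (negPf pq) big1 ?addr0.
  by rewrite subr0 mul1r sub0r eqxx mulNr mul1r.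
by move=> h /andP[/andP[_ /negPf->] /negPf->]; rewrite subr0 mul0r.
Qed.

Lemma sum_diff_weight1 p q : p \in A -> q \in A -> p != q ->
  \sum_(h in A) diff_weight p q h = 0.
Proof.
move=> pA qA pq; rewrite -[RHS](subrr (1 : F)) -(sum_diff_weight (fun _ => 1) pA qA pq).
by apply: eq_bigr => h _; rewrite mulr1.
Qed.

End HelperSums.
Arguments diff_weight {F n} p q h.

(* Both the MDS
   property (k = 2) and the repair schemes only depend on the 2 x 2
   determinants det2 u v k of the coefficient pairs of two nodes. *)
Section DiagonalCode.
Variables (F : fieldType) (n m : nat) (pa pb : 'I_n -> 'I_m -> F).

Definition diag_code (h : 'I_n) : 'M[F]_(m + m, m) :=
  col_mx (diag_mx (\row_k pa h k)) (diag_mx (\row_k pb h k)).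

Lemma diag_code_row (x : 'rV[F]_(m + m)) h k :
  (x *m diag_code h) 0 k = lsubmx x 0 k * pa h k + rsubmx x 0 k * pb h k.
Proof. by rewrite -{1}(hsubmxK x) /diag_code mul_row_col !mul_mx_diag !mxE. Qed.

Lemma diag_code_mul_u h (c : 'cV[F]_m) k :
  (diag_code h *m c) (lshift m k) 0 = c k 0 * pa h k.
Proof. by rewrite /diag_code mul_col_mx col_mxEu mul_diag_mx !mxE mulrC. Qed.

Lemma diag_code_mul_d h (c : 'cV[F]_m) k :
  (diag_code h *m c) (rshift m k) 0 = c k 0 * pb h k.
Proof. by rewrite /diag_code mul_col_mx col_mxEd mul_diag_mx !mxE mulrC. Qed.

Lemma diag_code_col_u h j k : col j (diag_code h) (lshift m k) 0 = (k == j)%:R * pa h k.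
Proof. by rewrite mxE col_mxEu !mxE mulr_natl. Qed.

Lemma diag_code_col_d h j k : col j (diag_code h) (rshift m k) 0 = (k == j)%:R * pb h k.
Proof. by rewrite mxE col_mxEd !mxE mulr_natl. Qed.

Lemma sum_diag_code_u (A : {set 'I_n}) (w : 'I_n -> F) (c : 'I_n -> 'cV[F]_m) k :
  (\sum_(h in A) w h *: (diag_code h *m c h)) (lshift m k) 0
  = \sum_(h in A) w h * (c h k 0 * pa h k).
Proof. by rewrite summxE; apply: eq_bigr => h _; rewrite mxE diag_code_mul_u. Qed.

Lemma sum_diag_code_d (A : {set 'I_n}) (w : 'I_n -> F) (c : 'I_n -> 'cV[F]_m) k :
  (\sum_(h in A) w h *: (diag_code h *m c h)) (rshift m k) 0
  = \sum_(h in A) w h * (c h k 0 * pb h k).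
Proof. by rewrite summxE; apply: eq_bigr => h _; rewrite mxE diag_code_mul_d. Qed.

Lemma cV_split_eq (u v : 'cV[F]_(m + m)) :
  (forall k, u (lshift m k) 0 = v (lshift m k) 0) ->
  (forall k, u (rshift m k) 0 = v (rshift m k) 0) -> u = v.
Proof.
move=> hu hv; apply/matrixP => i j; rewrite ord1.
by rewrite -(splitK i); case: (split i) => k /=.
Qed.

Definition det2 (u v : 'I_n) (k : 'I_m) : F := pa u k * pb v k - pb u k * pa v k.

Lemma det2C u v k : det2 v u k = - det2 u v k.
Proof. by rewrite /det2; ring. Qed.

(* The ratios whose spanning properties drive the repair of f with the help of g:
   writing node h as a combination of f and g in each coordinate, ratio f g h
   is the quotient of the g-weight by the f-weight. *)
Definition ratio (f g h : 'I_n) (k : 'I_m) : F := det2 f h k / det2 h g k.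

Lemma ratioC f g h k : ratio g f h k = det2 h g k / det2 f h k.
Proof. by rewrite /ratio (det2C h g) (det2C f h) invrN mulrNN. Qed.

Hypothesis det2_neq0 : forall u v k, u != v -> det2 u v k != 0.

Lemma det2_kernel u v k (s t : F) : u != v ->
  s * pa u k + t * pb u k = 0 -> s * pa v k + t * pb v k = 0 -> s = 0 /\ t = 0.
Proof.
move=> uv Eu Ev; have D := det2_neq0 k uv.
have Es : s * det2 u v k = pb v k * (s * pa u k + t * pb u k)
                           - pb u k * (s * pa v k + t * pb v k) by rewrite /det2; ring.
have Et : t * det2 u v k = pa u k * (s * pa v k + t * pb v k)
                           - pa v k * (s * pa u k + t * pb u k) by rewrite /det2; ring.
rewrite Eu Ev !mulr0 subrr in Es Et.
by move/eqP: Es; move/eqP: Et; rewrite !mulf_eq0 (negPf D) !orbF => /eqP-> /eqP->.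
Qed.

Lemma diag_code_mds : mds_property diag_code 2.
Proof.
move=> S /eqP /cards2P [u [v [uv ->]]] x y hxy; apply/eqP; rewrite -subr_eq0.
have z0 h : h \in [set u; v] -> (x - y) *m diag_code h = 0.
  by move=> hS; rewrite mulmxBl hxy // subrr.
have /z0/rowP zu := set21 u v; have /z0/rowP zv := set22 u v.
rewrite -(hsubmxK (x - y)); apply/eqP.
suff [-> ->] : lsubmx (x - y) = 0 /\ rsubmx (x - y) = 0 by rewrite row_mx0.
have K k : lsubmx (x - y) 0 k = 0 /\ rsubmx (x - y) 0 k = 0.
  apply: (det2_kernel (k := k) uv); rewrite -diag_code_row.
    by rewrite zu mxE.
  by rewrite zv mxE.
by split; apply/rowP => k; rewrite [RHS]mxE; have [] := K k.
Qed.

(* Cramer's rule: in every coordinate, the coefficients of any node h are a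
   combination of those of two distinct nodes f and g. *)
Lemma pa_expand f g : f != g -> forall h k,
  pa h k = (det2 h g k / det2 f g k) * pa f k + (det2 f h k / det2 f g k) * pa g k.
Proof. by move=> fg h k; have := det2_neq0 k fg; rewrite /det2 => D; field. Qed.

Lemma pb_expand f g : f != g -> forall h k,
  pb h k = (det2 h g k / det2 f g k) * pb f k + (det2 f h k / det2 f g k) * pb g k.
Proof. by move=> fg h k; have := det2_neq0 k fg; rewrite /det2 => D; field. Qed.

(* By Cramer's rule,
   in coordinate k every other node h stores a combination of x_f and x_g, so
   its symbols scaled by coef_f h sum to sum_k (ratio g f h * x_f + x_g), and
   scaled by coef_g h to sum_k gap * (x_f + ratio f g h * x_g), where gap is a
   nonzero vector built from two distinguished helpers p and q.  When f fails
   alone, g is a helper sending sum_k x_g; when f and g fail together, each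
   newcomer forwards a combination of its downloads to the other.  Spanning
   of the ratio families then lets each newcomer isolate every coordinate. *)
Section TwoNodeRepair.
Variables f g : 'I_n.
Hypothesis fg : f != g.
Variables p q : 'I_n.
Hypotheses (pH : p \in ~: [set f; g]) (qH : q \in ~: [set f; g]) (pq : p != q).

Definition gap k := ratio g f p k - ratio g f q k.
Definition coef_f h : 'cV[F]_m := \col_k (det2 f g k / det2 f h k).
Definition coef_g h : 'cV[F]_m := \col_k (gap k * (det2 f g k / det2 h g k)).

Lemma helper_neq (h : 'I_n) : h \in ~: [set f; g] -> (h != f) && (h != g).
Proof. by rewrite !inE negb_or. Qed.

Lemma gap_neq0 k : gap k != 0.
Proof.
have /andP[pf _] := helper_neq pH; have /andP[qf _] := helper_neq qH.
have h1 := det2_neq0 k fg; have h2 := det2_neq0 k pq.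
have h3 : det2 f p k != 0 by apply: det2_neq0; rewrite eq_sym.
have h4 : det2 f q k != 0 by apply: det2_neq0; rewrite eq_sym.
have -> : gap k = (det2 f g k * det2 p q k) / (det2 f p k * det2 f q k).
  by rewrite /gap !ratioC; move: h3 h4; rewrite /det2 => h3 h4; field; rewrite h3 h4.
by rewrite mulf_neq0 // ?invr_eq0 mulf_neq0.
Qed.

Section Recovery.
Variable P : 'I_n -> 'I_m -> F.
Hypothesis P_expand : forall h k,
  P h k = (det2 h g k / det2 f g k) * P f k + (det2 f h k / det2 f g k) * P g k.

Lemma coef_f_sym h k : h != f ->
  coef_f h k 0 * P h k = ratio g f h k * P f k + 1 * P g k.
Proof.
move=> hf; have h1 := det2_neq0 k fg.
have h2 : det2 f h k != 0 by apply: det2_neq0; rewrite eq_sym.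
rewrite mxE P_expand ratioC; move: h1 h2.
set a := det2 f h k; set b := det2 f g k => h1 h2.
by field; rewrite h1 h2.
Qed.

Lemma coef_g_sym h k : h != g ->
  coef_g h k 0 * P h k = gap k * P f k + (gap k * ratio f g h k) * P g k.
Proof.
move=> hg; have h1 := det2_neq0 k fg; have h2 : det2 h g k != 0 by apply: det2_neq0.
rewrite mxE P_expand /ratio; move: h1 h2.
set a := det2 h g k; set b := det2 f g k => h1 h2.
by field; rewrite h1 h2.
Qed.

(* Single repair of f: coordinate j of f is recovered from the downloads
   scaled by coef_f h (weights rho expressing e_j) and the plain sum of the
   symbols of g (weight - s). *)
Lemma recover_single (rho : 'I_n -> F) j k :
  (forall k, (k == j)%:R = \sum_(h in ~: [set f; g]) rho h * ratio g f h k) ->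
  (k == j)%:R * P f k =
  (- \sum_(h in ~: [set f; g]) rho h) * (1 * P g k)
  + \sum_(h in ~: [set f; g]) rho h * (coef_f h k 0 * P h k).
Proof.
move=> Hrho.
rewrite [X in _ + X](eq_bigr (fun h => rho h * (ratio g f h k * P f k + 1 * P g k)));
  last by move=> h /helper_neq /andP[hf _]; rewrite coef_f_sym.
rewrite sum_lin -Hrho.
under [X in _ = _ + (_ + X * _)]eq_bigr do rewrite mulr1.
ring.
Qed.

(* Newcomer f recovers coordinate j of its content from its downloads
   (weights rho + s * sg * diff_weight p q) and the coordination symbol of g
   (weights mu), where rho expresses e_j and mu expresses 1 / gap. *)
Lemma recover_f (rho mu : 'I_n -> F) j k :
  (forall k, (k == j)%:R = \sum_(h in ~: [set f; g]) rho h * ratio g f h k) ->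
  (forall k, (gap k)^-1 = \sum_(h in ~: [set f; g]) mu h * ratio f g h k) ->
  (k == j)%:R * P f k =
  \sum_(h in ~: [set f; g])
      (rho h + (\sum_(h in ~: [set f; g]) rho h) * (\sum_(h in ~: [set f; g]) mu h)
                 * diff_weight p q h) * (coef_f h k 0 * P h k)
  + (- \sum_(h in ~: [set f; g]) rho h) *
      \sum_(h in ~: [set f; g]) mu h * (coef_g h k 0 * P h k).
Proof.
move=> Hrho Hmu.
set s := \sum_(h in _) rho h; set sg := \sum_(h in _) mu h.
rewrite (eq_bigr (fun h => (rho h + s * sg * diff_weight p q h)
                           * (ratio g f h k * P f k + 1 * P g k))); last first.
  by move=> h /helper_neq /andP[hf _]; rewrite coef_f_sym.
rewrite [X in _ + _ * X](eq_bigr (fun h => mu h * (gap k * P f k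
                                    + (gap k * ratio f g h k) * P g k))); last first.
  by move=> h /helper_neq /andP[_ hg]; rewrite coef_g_sym.
rewrite !sum_lin.
have E1 : \sum_(h in ~: [set f; g]) (rho h + s * sg * diff_weight p q h) * ratio g f h k
          = (k == j)%:R + s * sg * gap k.
  under eq_bigr do rewrite mulrDl -mulrA.
  by rewrite big_split /= -mulr_sumr -Hrho sum_diff_weight.
have E2 : \sum_(h in ~: [set f; g]) (rho h + s * sg * diff_weight p q h) * 1 = s.
  under eq_bigr do rewrite mulr1.
  by rewrite big_split /= -mulr_sumr sum_diff_weight1 // mulr0 addr0.
have E3 : \sum_(h in ~: [set f; g]) mu h * gap k = sg * gap k by rewrite mulr_suml.
have E4 : \sum_(h in ~: [set f; g]) mu h * (gap k * ratio f g h k) = gap k * (gap k)^-1.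
  by rewrite Hmu mulr_sumr; apply: eq_bigr => h _; rewrite mulrCA.
rewrite E1 E2 E3 E4 divff ?gap_neq0 //.
ring.
Qed.

(* Newcomer g recovers coordinate j from its downloads (weights rho, which
   express e_j / gap) and the coordination symbol of f (weights diff_weight p q). *)
Lemma recover_g (rho : 'I_n -> F) j k :
  (forall k, (k == j)%:R / gap k = \sum_(h in ~: [set f; g]) rho h * ratio f g h k) ->
  (k == j)%:R * P g k =
  \sum_(h in ~: [set f; g]) rho h * (coef_g h k 0 * P h k)
  + (- \sum_(h in ~: [set f; g]) rho h) *
      \sum_(h in ~: [set f; g]) diff_weight p q h * (coef_f h k 0 * P h k).
Proof.
move=> Hrho; set s := \sum_(h in _) rho h.
rewrite (eq_bigr (fun h => rho h * (gap k * P f k + (gap k * ratio f g h k) * P g k)));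
  last by move=> h /helper_neq /andP[_ hg]; rewrite coef_g_sym.
rewrite [X in _ + _ * X](eq_bigr (fun h => diff_weight p q h
                                    * (ratio g f h k * P f k + 1 * P g k))); last first.
  by move=> h /helper_neq /andP[hf _]; rewrite coef_f_sym.
rewrite !sum_lin.
have E1 : \sum_(h in ~: [set f; g]) rho h * gap k = s * gap k by rewrite mulr_suml.
have E2 : \sum_(h in ~: [set f; g]) rho h * (gap k * ratio f g h k)
          = gap k * ((k == j)%:R / gap k).
  by rewrite Hrho mulr_sumr; apply: eq_bigr => h _; rewrite mulrCA.
have E3 : \sum_(h in ~: [set f; g]) diff_weight p q h * ratio g f h k = gap k.
  by rewrite sum_diff_weight.
have E4 : \sum_(h in ~: [set f; g]) diff_weight p q h * 1 = 0 :> F.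
  by under eq_bigr do rewrite mulr1; rewrite sum_diff_weight1.
rewrite E1 E2 E3 E4 mulrCA divff ?gap_neq0 //.
ring.
Qed.

End Recovery.
End TwoNodeRepair.

Lemma pair_repair f g p q : f != g ->
  p \in ~: [set f; g] -> q \in ~: [set f; g] -> p != q ->
  spans (~: [set f; g]) (ratio f g) -> spans (~: [set f; g]) (ratio g f) ->
  coord_repairable diag_code [set f; g].
Proof.
move=> fg pH qH pq sfg sgf; have gf : g != f by rewrite eq_sym.
have [mu Hmu] := sfg (fun k => (gap f g p q k)^-1).
pose c x h := if x == f then coef_f f g h else coef_g f g p q h.
pose e x (y : 'I_n) h := if x == g then mu h else diff_weight p q h.
apply: (coord_repairable_of_columns (c := c) (e := e)) => x j.
rewrite !inE => /orP[/eqP-> | /eqP->].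
  have [rho Hrho] := sgf (fun k => (k == j)%:R).
  set s := \sum_(h in ~: [set f; g]) rho h.
  set sg := \sum_(h in ~: [set f; g]) mu h.
  exists (fun h => rho h + s * sg * diff_weight p q h), (fun _ => - s).
  rewrite setU1K ?inE // big_set1 /c /e !eqxx (negPf gf).
  apply: cV_split_eq => k.
    rewrite diag_code_col_u mxE sum_diag_code_u mxE sum_diag_code_u.
    exact: (recover_f fg pH qH pq (pa_expand fg) k Hrho Hmu).
  rewrite diag_code_col_d mxE sum_diag_code_d mxE sum_diag_code_d.
  exact: (recover_f fg pH qH pq (pb_expand fg) k Hrho Hmu).
have [rho Hrho] := sfg (fun k => (k == j)%:R / gap f g p q k).
exists rho, (fun _ => - \sum_(h in ~: [set f; g]) rho h).
rewrite [X in X :\ g]setUC setU1K ?inE // big_set1 /c /e !eqxx (negPf gf) (negPf fg).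
apply: cV_split_eq => k.
  rewrite diag_code_col_u mxE sum_diag_code_u mxE sum_diag_code_u.
  exact: (recover_g fg pH qH pq (pa_expand fg) k Hrho).
rewrite diag_code_col_d mxE sum_diag_code_d mxE sum_diag_code_d.
exact: (recover_g fg pH qH pq (pb_expand fg) k Hrho).
Qed.

Lemma single_repair f g : f != g ->
  spans (~: [set f; g]) (ratio g f) -> coord_repairable diag_code [set f].
Proof.
move=> fg sgf.
pose c (x h : 'I_n) := if h == g then \col_(k < m) (1 : F) else coef_f f g h.
apply: (coord_repairable_of_columns (c := c) (e := fun _ _ _ => 0)) => x j.
rewrite inE => /eqP->.
have [rho Hrho] := sgf (fun k => (k == j)%:R).
set s := \sum_(h in ~: [set f; g]) rho h.
exists (fun h => if h == g then - s else rho h), (fun _ => 0).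
rewrite setDv big_set0 addr0.
have gT : g \in ~: [set f] by rewrite !inE eq_sym.
rewrite (bigD1 g) //= eqxx.
rewrite (eq_bigl (fun h => h \in ~: [set f; g])); last first.
  by move=> h; rewrite !inE negb_or.
rewrite (eq_bigr (fun h => rho h *: (diag_code h *m coef_f f g h))); last first.
  by move=> h /helper_neq /andP[_ /negPf hg]; rewrite /c hg.
apply: cV_split_eq => k.
  rewrite diag_code_col_u mxE sum_diag_code_u mxE diag_code_mul_u /c eqxx mxE.
  exact: (recover_single fg (pa_expand fg) k Hrho).
rewrite diag_code_col_d mxE sum_diag_code_d mxE diag_code_mul_d /c eqxx mxE.
exact: (recover_single fg (pb_expand fg) k Hrho).
Qed.

Lemma diag_code_repair1 (T : {set 'I_n}) : (1 < n)%N ->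
  (forall f g, f != g -> spans (~: [set f; g]) (ratio f g)) ->
  #|T| = 1%N -> coord_repairable diag_code T.
Proof.
move=> n1 sratio /eqP /cards1P [f ->].
have : (0 < #|~: [set f]|)%N by have := cardsC [set f]; rewrite cards1 card_ord; lia.
case/card_gt0P => g; rewrite !inE eq_sym => fg.
have gf : g != f by rewrite eq_sym.
by apply: (single_repair fg); rewrite setUC; exact: sratio.
Qed.

Lemma diag_code_repair2 (T : {set 'I_n}) : (3 < n)%N ->
  (forall f g, f != g -> spans (~: [set f; g]) (ratio f g)) ->
  #|T| = 2%N -> coord_repairable diag_code T.
Proof.
move=> n3 sratio /eqP /cards2P [f [g [fg ->]]].
have cH : #|~: [set f; g]| = (n - 2)%N.
  by have := cardsC [set f; g]; rewrite cards2 fg card_ord; lia.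
have /card_gt0P [p pH] : (0 < #|~: [set f; g]|)%N by rewrite cH; lia.
have : (0 < #|~: [set f; g] :\ p|)%N.
  by have := cardsD1 p (~: [set f; g]); rewrite pH cH; lia.
case/card_gt0P => q; rewrite in_setD1 => /andP[qp qH].
have gf : g != f by rewrite eq_sym.
apply: (pair_repair fg pH qH _ (sratio _ _ fg)); first by rewrite eq_sym.
by rewrite setUC; exact: sratio.
Qed.
End DiagonalCode.

Section RedundantNodes.
Variable n : nat.
Hypothesis n3 : (2 < n)%N.
Local Notation alpha := (n - 2)%N.

Lemma alpha_gt0 : (0 < alpha)%N. Proof. lia. Qed.

Definition redundant : {set 'I_n} := [set i : 'I_n | 2 <= i]%N.

Lemma red_node_lt s : (s %% alpha + 2 < n)%N.
Proof. by have := ltn_pmod s alpha_gt0; lia. Qed.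

Definition red_node (s : nat) : 'I_n := Ordinal (red_node_lt s).

Lemma red_node_redundant s : red_node s \in redundant.
Proof. by rewrite inE /=; lia. Qed.

Lemma red_node_pos s : (red_node s - 2 = s %% alpha)%N.
Proof. by rewrite /= addnK. Qed.

End RedundantNodes.

(* For z of order not dividing alpha, the cyclic shifts of (z^k)_k, placed on
   the redundant nodes, span F^alpha: the vector e_j is a combination of the
   shifts by alpha - 1 - j and alpha - j. *)
Section PowerFamily.
Variables (F : fieldType) (n : nat) (z : F).
Hypotheses (n3 : (2 < n)%N) (hz : z ^+ (n - 2) != 1).
Local Notation alpha := (n - 2)%N.

Definition power_row (i : 'I_n) (k : 'I_alpha) : F := z ^+ ((i - 2 + k) %% alpha).

Lemma power_row_red s k : power_row (red_node n3 s) k = z ^+ ((s + k) %% alpha).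
Proof. by rewrite /power_row red_node_pos modnDml. Qed.

Lemma pow_mod_step s :
  z ^+ ((s + 1) %% alpha) - z * z ^+ (s %% alpha)
  = (s %% alpha == alpha.-1)%N%:R * (1 - z ^+ alpha).
Proof.
have lt := ltn_pmod s (alpha_gt0 n3); rewrite -modnDml.
case: (eqVneq (s %% alpha)%N alpha.-1) => [->|ne].
  by rewrite addn1 prednK ?alpha_gt0 // modnn -exprS prednK ?alpha_gt0 // mul1r.
by rewrite modn_small ?addn1 ?exprS ?subrr ?mul0r //; lia.
Qed.

Lemma power_rows_span : spans (redundant n) power_row.
Proof.
apply: spans_basis => j; pose s := (alpha.-1 - j)%N.
have j_lt := ltn_ord j; have hz' : 1 - z ^+ alpha != 0 by rewrite subr_eq0 eq_sym.
apply: (in_span_comb2 (h1 := red_node n3 (s + 1)) (h2 := red_node n3 s)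
  (c1 := (1 - z ^+ alpha)^-1) (c2 := - ((1 - z ^+ alpha)^-1 * z)));
  rewrite ?red_node_redundant // => k.
rewrite !power_row_red addnAC mulNr -mulrA -mulrBr pow_mod_step.
suff -> : ((s + k) %% alpha == alpha.-1)%N = (k == j) by rewrite mulrCA mulVf // mulr1.
rewrite -[in LHS](_ : (s + j) %% alpha = alpha.-1)%N; last by rewrite modn_small /s; lia.
by rewrite eqn_modDl !modn_small.
Qed.

End PowerFamily.

Section CyclicCode.
Variables (F : fieldType) (n N : nat) (w : F).
Hypotheses (n4 : (4 <= n)%N) (wprim : N.-primitive_root w) (alphaN : (n - 2 < N)%N).
Local Notation alpha := (n - 2)%N.

Let n_gt2 : (2 < n)%N. Proof. lia. Qed.
Let n_gt0 : (0 < n)%N. Proof. lia. Qed.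
Let n_gt1 : (1 < n)%N. Proof. lia. Qed.

Local Notation lam := (power_row w).
Local Notation red_node := (red_node n_gt2).

Definition node0 : 'I_n := Ordinal n_gt0.
Definition node1 : 'I_n := Ordinal n_gt1.

Definition code_a (i : 'I_n) (k : 'I_alpha) : F := if i == 1%N :> nat then 0 else 1.
Definition code_b (i : 'I_n) (k : 'I_alpha) : F :=
  if i == 0%N :> nat then 0 else if i == 1%N :> nat then 1 else lam i k.

Lemma node_cases (u : 'I_n) : [\/ u = node0, u = node1 | (2 <= u)%N].
Proof.
case: u => [[|[|x]] hx].
- by apply: Or31; apply: val_inj.
- by apply: Or32; apply: val_inj.
- by apply: Or33.
Qed.

Lemma adrc_node_diag (i : 'I_n) : adrc_node w i = diag_code code_a code_b i.
Proof.
rewrite /adrc_node /diag_code /code_a /code_b.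
case: (node_cases i) => [->|->|i2] /=.
- by congr col_mx; apply/matrixP => r c; rewrite !mxE ?mul0rn.
- by congr col_mx; apply/matrixP => r c; rewrite !mxE ?mul0rn.
have [i0 i1] : (i == 0%N :> nat) = false /\ (i == 1%N :> nat) = false.
  by split; apply/eqP; lia.
by rewrite i0 i1; congr col_mx; apply/matrixP => r c; rewrite !mxE ?i0 ?i1.
Qed.

Lemma node01 : node0 != node1. Proof. by []. Qed.
Lemma red_neq0 (u : 'I_n) : (2 <= u)%N -> u != node0.
Proof. by move=> h; rewrite -val_eqE /=; apply/eqP; lia. Qed.
Lemma red_neq1 (u : 'I_n) : (2 <= u)%N -> u != node1.
Proof. by move=> h; rewrite -val_eqE /=; apply/eqP; lia. Qed.

Lemma code_a0 k : code_a node0 k = 1. Proof. by []. Qed.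
Lemma code_b0 k : code_b node0 k = 0. Proof. by []. Qed.
Lemma code_a1 k : code_a node1 k = 0. Proof. by []. Qed.
Lemma code_b1 k : code_b node1 k = 1. Proof. by []. Qed.
Lemma code_aR (u : 'I_n) k : (2 <= u)%N -> code_a u k = 1.
Proof. by move=> h; rewrite /code_a ifN //; apply/eqP; lia. Qed.
Lemma code_bR (u : 'I_n) k : (2 <= u)%N -> code_b u k = lam u k.
Proof. by move=> h; rewrite /code_b !ifN //; apply/eqP; lia. Qed.

Lemma w_neq0 : w != 0.
Proof.
apply: contra_eq_neq (prim_expr_order wprim) => ->.
by rewrite expr0n gtn_eqF ?(prim_order_gt0 wprim) // eq_sym oner_neq0.
Qed.

Lemma w_expr_neq1 d : (0 < d < N)%N -> w ^+ d != 1.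
Proof. by case/andP=> d0 dN; rewrite -(prim_order_dvd wprim) gtnNdvd. Qed.

Lemma lam_neq0 (i : 'I_n) (k : 'I_alpha) : lam i k != 0.
Proof. by rewrite expf_neq0 // w_neq0. Qed.

Lemma lam_inj (u v : 'I_n) (k : 'I_alpha) :
  (2 <= u)%N -> (2 <= v)%N -> u != v -> lam u k != lam v k.
Proof.
move=> hu hv uv; rewrite /power_row (eq_prim_root_expr wprim).
have ha := ltn_pmod (u - 2 + k) (alpha_gt0 n_gt2).
have hb := ltn_pmod (v - 2 + k) (alpha_gt0 n_gt2).
rewrite !(@modn_small _ N) ?(ltn_trans _ alphaN) // eqn_modDr.
have := ltn_ord u; have := ltn_ord v => lu lv.
rewrite !modn_small; try lia.
by apply: contra uv => /eqP e; apply/eqP/val_inj => /=; lia.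
Qed.

Lemma lam_sub_neq0 (u v : 'I_n) (k : 'I_alpha) :
  (2 <= u)%N -> (2 <= v)%N -> u != v -> lam u k - lam v k != 0.
Proof. by move=> hu hv uv; rewrite subr_eq0 lam_inj. Qed.

Lemma code_det2_neq0 (u v : 'I_n) k : u != v -> det2 code_a code_b u v k != 0.
Proof.
rewrite /det2.
case: (node_cases u) => [->|->|hu]; case: (node_cases v) => [->|->|hv];
  rewrite ?eqxx // => uv;
  rewrite ?code_a0 ?code_b0 ?code_a1 ?code_b1 ?code_aR ?code_bR //.
- by rewrite !mulr1 !mulr0 subr0 oner_eq0.
- by rewrite mul1r mul0r subr0 lam_neq0.
- by rewrite !mul0r !mulr1 sub0r oppr_eq0 oner_eq0.
- by rewrite !mul0r mul1r sub0r oppr_eq0 oner_eq0.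
- by rewrite mulr0 mulr1 sub0r oppr_eq0 lam_neq0.
- by rewrite mulr0 !mulr1 subr0 oner_eq0.
- by rewrite !mul1r !mulr1 lam_sub_neq0 // eq_sym.
Qed.

(* Writing expo k for the
   exponent of lam g k, the vector of the node at offset d from g takes one of
   two values according to whether expo k + d wraps around alpha; combined
   with the constant vector -1 of node0 this yields the threshold vectors
   [alpha <= expo k + d], whose consecutive differences are the basis vectors. *)
Section CauchyRows.
Variable g : 'I_n.
Hypothesis g2 : (2 <= g)%N.

Definition cauchy_helpers : {set 'I_n} := ~: [set node1; g].
Definition cauchy_row (h : 'I_n) (k : 'I_alpha) : F := lam g k / (code_b h k - lam g k).
Definition expo (k : 'I_alpha) : nat := ((g - 2 + k) %% alpha)%N.

Lemma expo_lt k : (expo k < alpha)%N.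
Proof. exact: ltn_pmod (alpha_gt0 n_gt2). Qed.

Lemma expo_inj : injective expo.
Proof.
have gl : (g - 2 < alpha)%N by have := ltn_ord g; lia.
by move=> k j /eqP; rewrite /expo eqn_modDl !modn_small // => /eqP /val_inj.
Qed.

Lemma node0_cauchy_helper : node0 \in cauchy_helpers.
Proof. by rewrite !inE negb_or node01 eq_sym red_neq0. Qed.

Lemma cauchy_row0 k : cauchy_row node0 k = -1.
Proof. by rewrite /cauchy_row code_b0 sub0r invrN mulrN divff ?lam_neq0. Qed.

(* The two values of the vector of the node at offset d. *)
Definition wrap_lo d : F := (w ^+ d - 1)^-1.
Definition wrap_hi d : F := w ^+ (alpha - d) / (1 - w ^+ (alpha - d)).

Lemma shift_node_helper d : (0 < d < alpha)%N -> red_node (g - 2 + d) \in cauchy_helpers.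
Proof.
move=> /andP[d0 da]; rewrite !inE negb_or red_neq1 /=; last by lia.
have gl : (g - 2 < alpha)%N by have := ltn_ord g; lia.
apply/eqP => /(congr1 (fun i : 'I_n => (nat_of_ord i - 2)%N)); rewrite red_node_pos.
have [lt|ge] := ltnP (g - 2 + d) alpha; first by rewrite modn_small //; lia.
by rewrite -(subnK ge) modnDr modn_small; lia.
Qed.

Lemma cauchy_row_shift d k : (0 < d < alpha)%N ->
  cauchy_row (red_node (g - 2 + d)) k
  = if (alpha <= expo k + d)%N then wrap_hi d else wrap_lo d.
Proof.
move=> /andP[d0 da]; have ek := expo_lt k.
have wd1 : w ^+ d - 1 != 0 by rewrite subr_eq0 w_expr_neq1 //; lia.
have wt1 : 1 - w ^+ (alpha - d) != 0 by rewrite subr_eq0 eq_sym w_expr_neq1 //; lia.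
have red2 : (2 <= red_node (g - 2 + d))%N by rewrite /=; lia.
rewrite /cauchy_row code_bR // power_row_red addnAC -modnDml.
rewrite [lam g k]/(power_row w g k) -/(expo k).
have we e : w ^+ e != 0 by rewrite expf_neq0 // w_neq0.
case: leqP => wrap.
  have -> : ((expo k + d) %% alpha = expo k + d - alpha)%N.
    by rewrite -{1}(subnK wrap) modnDr modn_small //; lia.
  have -> : w ^+ expo k = w ^+ (expo k + d - alpha) * w ^+ (alpha - d).
    by rewrite -exprD; congr (_ ^+ _); lia.
  move: (we (expo k + d - alpha)%N) wt1; rewrite /wrap_hi.
  set x := w ^+ (_ - alpha); set y := w ^+ (alpha - d) => h1 h2.
  by field; rewrite h2 /= -{1}(mulr1 x) -mulrBr mulf_neq0.
rewrite modn_small // exprD /wrap_lo.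
move: (we (expo k)) wd1; set x := w ^+ expo k; set y := w ^+ d => h1 h2.
by field; rewrite h2 /= -{2}(mulr1 x) -mulrBr mulf_neq0.
Qed.

Lemma wrap_gap_neq0 d : (0 < d < alpha)%N -> wrap_hi d - wrap_lo d != 0.
Proof.
move=> /andP[d0 da].
have wd1 : 1 - w ^+ d != 0 by rewrite subr_eq0 eq_sym w_expr_neq1 //; lia.
have wt1 : 1 - w ^+ (alpha - d) != 0 by rewrite subr_eq0 eq_sym w_expr_neq1 //; lia.
have wa1 : 1 - w ^+ (alpha - d) * w ^+ d != 0.
  by rewrite -exprD subnK 1?ltnW // subr_eq0 eq_sym w_expr_neq1 // alpha_gt0.
have -> : wrap_hi d - wrap_lo d
          = (1 - w ^+ (alpha - d) * w ^+ d) / ((1 - w ^+ (alpha - d)) * (1 - w ^+ d)).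
  move: wd1 wt1; rewrite /wrap_hi /wrap_lo; set x := w ^+ d; set y := w ^+ (alpha - d).
  move=> h1 h2; have h3 : x - 1 != 0 by rewrite -opprB oppr_eq0.
  by field; rewrite h1 h2 h3.
by rewrite mulf_neq0 // invr_eq0 mulf_neq0.
Qed.

Lemma threshold_in_span d : (d <= alpha)%N ->
  in_span cauchy_helpers cauchy_row (fun k => (alpha <= expo k + d)%N%:R).
Proof.
move=> da; have h0 := node0_cauchy_helper.
have [->|[->|dd]] : d = 0%N \/ d = alpha \/ (0 < d < alpha)%N by lia.
- apply: (in_span_comb1 (c := 0) h0) => k.
  by rewrite mul0r addn0 leqNgt expo_lt.
- by apply: (in_span_comb1 (c := -1) h0) => k; rewrite cauchy_row0 mulN1r opprK leq_addl.
have gap := wrap_gap_neq0 dd.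
apply: (in_span_comb2 (shift_node_helper dd) h0
  (c1 := (wrap_hi d - wrap_lo d)^-1) (c2 := (wrap_hi d - wrap_lo d)^-1 * wrap_lo d)) => k.
rewrite cauchy_row_shift // cauchy_row0 mulrN1 -mulrN -mulrDr.
by case: leqP => _; rewrite ?subrr ?mulr0 ?mulVf.
Qed.

Lemma cauchy_rows_span : spans cauchy_helpers cauchy_row.
Proof.
apply: spans_basis => j; have ej := expo_lt j.
apply: (in_span_ext (v' := fun k => (alpha <= expo k + (alpha - expo j))%N%:R
                                  - (alpha <= expo k + (alpha - expo j - 1))%N%:R)).
  move=> k; have ek := expo_lt k.
  have -> : (alpha <= expo k + (alpha - expo j))%N = (expo j <= expo k)%N.
    by apply/idP/idP; lia.
  have -> : (alpha <= expo k + (alpha - expo j - 1))%N = (expo j < expo k)%N.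
    by apply/idP/idP; lia.
  by rewrite -(inj_eq expo_inj); case: ltngtP; rewrite ?subrr ?subr0.
apply: in_spanD; first by apply: threshold_in_span; exact: leq_subr.
apply: (in_span_ext (v' := fun k => -1 * (alpha <= expo k + (alpha - expo j - 1))%N%:R)).
  by move=> k; rewrite mulN1r.
by apply/in_spanZ/threshold_in_span; rewrite -subnDA leq_subr.
Qed.

End CauchyRows.

(* Each family is compared with a power family or a Cauchy
   family: every member of the latter is a combination of at most two members
   of the ratio family, up to a nonzero rescaling of the coordinates. *)
Local Notation code_ratio := (ratio code_a code_b).

Lemma in_compl2 (h f g : 'I_n) : h != f -> h != g -> h \in ~: [set f; g].
Proof. by move=> hf hg; rewrite !inE negb_or hf hg. Qed.

Local Ltac distinct_nodes :=
  first [ done | exact: node01 | by rewrite eq_sym node01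
        | exact: red_neq0 | exact: red_neq1
        | by rewrite eq_sym red_neq0 | by rewrite eq_sym red_neq1 | by rewrite eq_sym ].

Local Ltac unfold_ratio :=
  rewrite /ratio /det2 ?code_a0 ?code_b0 ?code_a1 ?code_b1 !code_aR // !code_bR //.

Lemma power_row_inv (i : 'I_n) k : power_row w^-1 i k = (lam i k)^-1.
Proof. by rewrite /power_row exprVn. Qed.

Lemma winv_alpha_neq1 : w^-1 ^+ alpha != 1.
Proof. by rewrite exprVn invr_eq1 w_expr_neq1 // alpha_gt0. Qed.

Lemma w_alpha_neq1 : w ^+ alpha != 1.
Proof. by rewrite w_expr_neq1 // alpha_gt0. Qed.

(* ratio node0 node1 h = lam h: the power family of w itself. *)
Lemma spans_ratio01 : spans (~: [set node0; node1]) (code_ratio node0 node1).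
Proof.
apply: (spans_trans (power_rows_span n_gt2 w_alpha_neq1)) => i; rewrite inE => iR.
apply: (in_span_comb1 (h := i) (c := 1)); first by apply: in_compl2; distinct_nodes.
by move=> k; unfold_ratio; rewrite !mul1r !mul0r !mulr0 !subr0 divr1.
Qed.

(* ratio node1 node0 h = 1 / lam h: the power family of w^-1. *)
Lemma spans_ratio10 : spans (~: [set node1; node0]) (code_ratio node1 node0).
Proof.
apply: (spans_trans (power_rows_span n_gt2 winv_alpha_neq1)) => i; rewrite inE => iR.
apply: (in_span_comb1 (h := i) (c := 1)); first by apply: in_compl2; distinct_nodes.
move=> k; unfold_ratio; rewrite power_row_inv.
by have := lam_neq0 i k; set L := lam i k => hL; field; rewrite oppr_eq0 hL.
Qed.

Local Ltac field_nonzero :=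
  field; repeat (apply/andP; split); rewrite ?oppr_eq0 ?oner_eq0 //.

Section RatiosAtRedundant.
Variable g : 'I_n.
Hypothesis g2 : (2 <= g)%N.

(* ratio node0 g is -1 at node1 and lam h / (lam g - lam h) at h: the Cauchy
   vector of h is the difference of the ratio vectors of node1 and h. *)
Lemma spans_ratio0R : spans (~: [set node0; g]) (code_ratio node0 g).
Proof.
apply: (spans_trans (cauchy_rows_span g2)) => h hH.
have n1H : node1 \in ~: [set node0; g] by apply: in_compl2; distinct_nodes.
case: (node_cases h) => [->|eh|hR].
- apply: (in_span_comb1 n1H (c := 1)) => k.
  rewrite cauchy_row0; unfold_ratio.
  by have := lam_neq0 g k; set L := lam g k => hL; field_nonzero.
- by move: hH; rewrite eh !inE eqxx.
have hg : h != g by move: hH; rewrite !inE negb_or => /andP[_].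
have gh : g != h by rewrite eq_sym.
apply: (in_span_comb2 n1H (h2 := h) (c1 := 1) (c2 := -1));
  first by apply: in_compl2; distinct_nodes.
move=> k; rewrite /cauchy_row code_bR //; unfold_ratio.
move: (lam_neq0 g k) (lam_sub_neq0 k hR g2 hg) (lam_sub_neq0 k g2 hR gh).
by set L := lam g k; set M := lam h k => h1 h2 h3; field_nonzero.
Qed.

(* ratio g node0 is -1 at node1 and lam g / lam h - 1 at h, i.e. the power
   family of w^-1, rescaled by lam g, shifted by the ratio vector of node1. *)
Lemma spans_ratioR0 : spans (~: [set g; node0]) (code_ratio g node0).
Proof.
apply: (spans_trans (spans_scale (D := lam g) (power_rows_span n_gt2 winv_alpha_neq1)
                                 (lam_neq0 g))) => i; rewrite inE => iR.
have n1H : node1 \in ~: [set g; node0] by apply: in_compl2; distinct_nodes.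
case: (eqVneq i g) => [->|ig].
- apply: (in_span_comb1 n1H (c := -1)) => k.
  rewrite power_row_inv; unfold_ratio.
  by have := lam_neq0 g k; set L := lam g k => h1; field_nonzero.
apply: (in_span_comb2 (h1 := i) _ n1H (c1 := 1) (c2 := -1));
  first by apply: in_compl2; distinct_nodes.
move=> k; rewrite power_row_inv; unfold_ratio.
move: (lam_neq0 g k) (lam_neq0 i k).
by set L := lam g k; set M := lam i k => h1 h2; field_nonzero.
Qed.

(* ratio node1 g is the Cauchy family rescaled by 1 / lam g. *)
Lemma spans_ratio1R : spans (~: [set node1; g]) (code_ratio node1 g).
Proof.
have Linv k : (lam g k)^-1 != 0 by rewrite invr_neq0 // lam_neq0.
apply: (spans_ext _ (spans_scale (cauchy_rows_span g2) Linv)) => h k hH.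
have Lg := lam_neq0 g k.
case: (node_cases h) => [->|eh|hR].
- rewrite cauchy_row0; unfold_ratio.
  by move: Lg; set L := lam g k => h1; field_nonzero.
- by move: hH; rewrite eh !inE eqxx.
have hg : h != g by move: hH; rewrite !inE negb_or => /andP[_].
have gh : g != h by rewrite eq_sym.
rewrite /cauchy_row code_bR //; unfold_ratio.
move: Lg (lam_sub_neq0 k hR g2 hg) (lam_sub_neq0 k g2 hR gh).
by set L := lam g k; set M := lam h k => h1 h2 h3; field_nonzero.
Qed.

(* ratio g node1 is - lam g at node0 and lam h - lam g at h, i.e. the power
   family of w shifted by the ratio vector of node0. *)
Lemma spans_ratioR1 : spans (~: [set g; node1]) (code_ratio g node1).
Proof.
apply: (spans_trans (power_rows_span n_gt2 w_alpha_neq1)) => i; rewrite inE => iR.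
have n0H : node0 \in ~: [set g; node1] by apply: in_compl2; distinct_nodes.
case: (eqVneq i g) => [->|ig].
- apply: (in_span_comb1 n0H (c := -1)) => k; unfold_ratio.
  by set L := lam g k; field_nonzero.
apply: (in_span_comb2 (h1 := i) _ n0H (c1 := 1) (c2 := -1));
  first by apply: in_compl2; distinct_nodes.
by move=> k; unfold_ratio; set L := lam g k; set M := lam i k; field_nonzero.
Qed.

(* For redundant f != g, ratio f g is -1 at node1, - lam f / lam g at node0
   and (lam h - lam f) / (lam g - lam h) at h; combinations of two of these
   give the Cauchy family rescaled by (lam g - lam f) / lam g. *)
Lemma spans_ratioRR (f : 'I_n) :
  (2 <= f)%N -> f != g -> spans (~: [set f; g]) (code_ratio f g).
Proof.
move=> f2 fg; have gf : g != f by rewrite eq_sym.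
pose D k := (lam g k - lam f k) / lam g k.
have Dnz k : D k != 0 by rewrite /D mulf_neq0 ?invr_neq0 ?lam_neq0 ?lam_sub_neq0.
apply: (spans_trans (spans_scale (cauchy_rows_span g2) Dnz)) => h hH.
have n1H : node1 \in ~: [set f; g] by apply: in_compl2; distinct_nodes.
have n0H : node0 \in ~: [set f; g] by apply: in_compl2; distinct_nodes.
case: (node_cases h) => [->|eh|hR].
- apply: (in_span_comb2 n1H n0H (c1 := 1) (c2 := -1)) => k.
  rewrite /D cauchy_row0; unfold_ratio.
  move: (lam_neq0 g k) (lam_sub_neq0 k g2 f2 gf).
  by set L := lam g k; set M := lam f k => h1 h2; field_nonzero.
- by move: hH; rewrite eh !inE eqxx.
have hg : h != g by move: hH; rewrite !inE negb_or => /andP[_].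
have gh : g != h by rewrite eq_sym.
case: (eqVneq h f) => [->|hf].
- apply: (in_span_comb1 n1H (c := 1)) => k.
  rewrite /D /cauchy_row code_bR //; unfold_ratio.
  move: (lam_neq0 g k) (lam_sub_neq0 k g2 f2 gf) (lam_sub_neq0 k f2 g2 fg).
  by set L := lam g k; set M := lam f k => h1 h2 h3; field_nonzero.
apply: (in_span_comb2 n1H (h2 := h) (c1 := 1) (c2 := -1));
  first by apply: in_compl2; distinct_nodes.
move=> k; rewrite /D /cauchy_row code_bR //; unfold_ratio.
move: (lam_neq0 g k) (lam_sub_neq0 k g2 f2 gf) (lam_sub_neq0 k hR g2 hg)
      (lam_sub_neq0 k g2 hR gh).
by set L := lam g k; set M := lam f k; set Q := lam h k => h1 h2 h3 h4; field_nonzero.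
Qed.

End RatiosAtRedundant.

Lemma spans_code_ratio (f g : 'I_n) : f != g -> spans (~: [set f; g]) (code_ratio f g).
Proof.
case: (node_cases f) => [->|->|f2]; case: (node_cases g) => [->|->|g2];
  rewrite ?eqxx // => fg.
- exact: spans_ratio01.
- exact: spans_ratio0R.
- exact: spans_ratio10.
- exact: spans_ratio1R.
- exact: spans_ratioR0.
- exact: spans_ratioR1.
- exact: spans_ratioRR.
Qed.

Lemma adrc_mds : mds_property (adrc_node (n := n) w) 2.
Proof.
move=> S hS x y hxy; apply: (diag_code_mds code_det2_neq0 hS) => i iS.
by rewrite -!adrc_node_diag hxy.
Qed.

Lemma adrc_repair1 (T : {set 'I_n}) : #|T| = 1%N -> coord_repairable (adrc_node w) T.
Proof.
move=> T1; apply: (coord_repairable_ext adrc_node_diag).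
exact: (diag_code_repair1 code_det2_neq0 n_gt1 spans_code_ratio).
Qed.

Lemma adrc_repair2 (T : {set 'I_n}) : #|T| = 2%N -> coord_repairable (adrc_node w) T.
Proof.
move=> T2; apply: (coord_repairable_ext adrc_node_diag).
exact: (diag_code_repair2 code_det2_neq0 n4 spans_code_ratio).
Qed.

End CyclicCode.

(* The multiplicative group of a prime field F_p is cyclic: it contains a
   primitive (p - 1)-th root of unity. *)
Lemma Fp_primitive_root p : prime p -> exists w : 'F_p, (#|'F_p|.-1).-primitive_root w.
Proof.
move=> pp; have cF : #|'F_p| = p := card_Fp pp.
have : has (#|'F_p|.-1).-primitive_root (enum [set~ (0 : 'F_p)]).
  apply: cyclic.has_prim_root.
  - by rewrite cF; have := prime_gt1 pp; lia.
  - apply/allP => x; rewrite mem_enum !inE => x0; rewrite unity_rootE; apply/eqP.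
    apply: (mulIf x0); rewrite mul1r -exprSr prednK ?expf_card //.
    by rewrite cF prime_gt0.
  - exact: enum_uniq.
  - by rewrite -cardE cardsC1.
by case/hasP=> w _ wprim; exists w.
Qed.

Unset Implicit Arguments.

Theorem theorem2 (n : nat) : (5 <= n)%N ->
  exists (F : finFieldType) (w : F),
    [/\ (n - 2 <= #|F|.-1)%N,
        (#|F|.-1).-primitive_root w,
        mds_property (adrc_node (n := n) w) 2,
        (forall T : {set 'I_n}, #|T| = 2%N -> coord_repairable (adrc_node w) T)
      & (forall T : {set 'I_n}, #|T| = 1%N -> coord_repairable (adrc_node w) T)].
Proof.
move=> n5; have [p np pp] := prime_above n.
have [w wprim] := Fp_primitive_root pp.
have alphaN : (n - 2 < #|'F_p|.-1)%N by rewrite card_Fp //; lia.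
have n4 : (4 <= n)%N by lia.
exists 'F_p, w; split.
- exact: ltnW.
- exact: wprim.
- exact: adrc_mds n4 wprim alphaN.
- exact: adrc_repair2 n4 wprim alphaN.
- exact: adrc_repair1 n4 wprim alphaN.
Qed.
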